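(* Let $R$ be a ring and $n$ a positive integer. If every proper ideal of $R$ is weakly $n$-absorbing, then $\mathrm{Jac}(R)^{n+1}=0$, and so $\mathrm{Jac}(R)=\mathrm{Nil}(R)$.
   Context: All rings are commutative with $1\neq0$. A proper ideal $I$ of $R$ is weakly $n$-absorbing if whenever $0\neq a_1\cdots a_{n+1}\in I$ with $a_1,\dots,a_{n+1}\in R$, there are $n$ of the $a_i$'s whose product is in $I$. $\mathrm{Jac}(R)$ is the Jacobson radical (intersection of all maximal ideals) and $\mathrm{Nil}(R)$ the ideal of nilpotent elements. *)

From HB Require Import structures.
From mathcomp Require Import all_boot all_order all_algebra.
Set Implicit Arguments. Unset Strict Implicit. Unset Printing Implicit Defensive.
Import GRing.Theory.
Local Open Scope ring_scope.

Definition is_ideal (R : comNzRingType) (I : R -> Prop) : Prop :=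
  [/\ I 0, (forall x y, I x -> I y -> I (x + y)) & (forall r x, I x -> I (r * x))].

Definition proper_idl (R : comNzRingType) (I : R -> Prop) : Prop :=
  is_ideal I /\ ~ I 1.

Definition maximal_idl (R : comNzRingType) (M : R -> Prop) : Prop :=
  proper_idl M /\
  (forall J : R -> Prop, proper_idl J -> (forall x, M x -> J x) ->
     forall x, J x -> M x).

Definition Jacrad (R : comNzRingType) : R -> Prop :=
  fun x => forall M : R -> Prop, maximal_idl M -> M x.

Definition Nilrad (R : comNzRingType) : R -> Prop :=
  fun x => exists m : nat, x ^+ m = 0.

Definition ideal_pow (R : comNzRingType) (I : R -> Prop) (k : nat) : R -> Prop :=
  fun x => exists s : seq (k.-tuple R),
    (forall t, t \in s -> forall a, a \in t -> I a) /\
    x = \sum_(t <- s) \prod_(a <- t) a.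

Definition weakly_n_absorbing (R : comNzRingType) (n : nat) (I : R -> Prop) : Prop :=
  proper_idl I /\
  forall a : 'I_n.+1 -> R,
    \prod_(i < n.+1) a i != 0 -> I (\prod_(i < n.+1) a i) ->
    exists j : 'I_n.+1, I (\prod_(i < n.+1 | i != j) a i).

(* Every element x of Jac(R) has 1 - x r a unit for all r.  Given a_0, ..., a_n in Jac(R)
   with p = a_0 ... a_n nonzero, apply weak n-absorption to the principal ideal (p): some
   product q of n of the factors lies in (p), say q = p s = a_j s q.  Then q (1 - a_j s) = 0
   forces q = 0, hence p = a_j q = 0, a contradiction.  So Jac(R)^(n+1) = 0; in particular
   Jac(R) is nil, and Nil(R) lies in every maximal (hence prime) ideal. *)

From mathcomp Require Import all_boot all_order all_algebra.
From mathcomp Require Import boolp classical_sets.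
Set Implicit Arguments. Unset Strict Implicit. Unset Printing Implicit Defensive.
Import GRing.Theory.
Local Open Scope classical_set_scope.
Local Open Scope ring_scope.

Section Ideals.
Variable R : comNzRingType.

Lemma idealMr (I : R -> Prop) : is_ideal I -> forall x r, I x -> I (x * r).
Proof. by case=> _ _ hm x r hx; rewrite mulrC; apply: hm. Qed.

Definition principal_idl (a : R) : R -> Prop := fun y => exists s, y = a * s.

Lemma principal_idl_proper (a : R) :
  (forall s, a * s <> 1) -> proper_idl (principal_idl a).
Proof.
move=> nunit; split; last by move=> [s e]; apply: (nunit s).
split.
- by exists 0; rewrite mulr0.
- by move=> u v [s ->] [t ->]; exists (s + t); rewrite mulrDr.
- by move=> c u [s ->]; exists (c * s); rewrite mulrCA.
Qed.

Lemma proper_idl_zero : proper_idl (fun x : R => x = 0).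
Proof.
split; last by move/eqP; rewrite oner_eq0.
split => //; first by move=> x y -> ->; rewrite addr0.
by move=> r x ->; rewrite mulr0.
Qed.

Lemma is_ideal_bigcup_chain (F : set (set R)) :
  F !=set0 -> (forall X, F X -> is_ideal X) -> total_on F subset ->
  is_ideal (\bigcup_(X in F) X).
Proof.
move=> [X0 FX0] Fid Ftot; split.
- by exists X0 => //; case: (Fid _ FX0).
- move=> x y [X FX Xx] [Y FY Yy].
  case: (Ftot X Y FX FY) => sub.
  + by exists Y => //; case: (Fid _ FY) => _ add _; apply: add => //; apply: sub.
  + by exists X => //; case: (Fid _ FX) => _ add _; apply: add => //; apply: sub.
- by move=> r x [X FX Xx]; exists X => //; case: (Fid _ FX) => _ _ mul; apply: mul.
Qed.

Lemma exists_maximal_idl (K : R -> Prop) : proper_idl K ->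
  exists M, maximal_idl M /\ (forall x, K x -> M x).
Proof.
move=> Kpr.
(* [set0] is admitted so that the empty chain has an upper bound. *)
pose P := fun X : set R => X = set0 \/ (proper_idl X /\ K `<=` X).
have [A [PA Amax]] : exists A, P A /\ forall B, A `<` B -> ~ P B.
  apply: Zorn_bigcup => F FP Ftot.
  have [[X0 [FX0 X0n]]|allz] := pselect (exists X, F X /\ X <> set0); last first.
    left; apply/seteqP; split => // x [X FX Xx]; apply: allz; exists X; split => //.
    by move=> X0; rewrite X0 in Xx.
  have FPr X : F X -> X <> set0 -> proper_idl X /\ K `<=` X.
    by move=> FX Xn; case: (FP X FX).
  pose F' := [set X | F X /\ X <> set0].
  have -> : \bigcup_(X in F) X = \bigcup_(X in F') X.
    apply/seteqP; split => x [X FX Xx]; last by exists X; first exact: FX.1.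
    by exists X => //; split => // e; rewrite e in Xx.
  right; split; last by move=> x Kx; exists X0 => //; apply: (FPr _ FX0 X0n).2.
  split.
    apply: is_ideal_bigcup_chain; first by exists X0.
      by move=> X [FX Xn]; case: (FPr _ FX Xn) => -[].
    by move=> X Y [FX _] [FY _]; apply: Ftot.
  by move=> [X [FX Xn] X1]; case: (FPr _ FX Xn) => -[_ []].
have PK : P K by right; split.
case: PA => [A0|[Apr AK]].
  have [[K0 _ _] _] := Kpr.
  by exfalso; apply: (Amax K) => //; rewrite A0; split => // sub; have := sub 0 K0.
exists A; split => //; split => // J Jpr AJ x Jx.
apply: contrapT => nAx.
apply: (Amax J); first by split => // sub; apply: nAx; apply: sub.
by right; split => // y Ky; apply: AJ; apply: AK.
Qed.

Lemma maximal_idl_prime (M : R -> Prop) : maximal_idl M ->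
  forall a b, M (a * b) -> ~ M a -> M b.
Proof.
move=> [[[M0 Madd Mmul] _] Mmax] a b Mab nMa.
pose J := fun y => exists m r, M m /\ y = m + a * r.
have Jid : is_ideal J.
  split.
  - by exists 0, 0; rewrite mulr0 addr0.
  - move=> x y [m [r [Mm ->]]] [m' [r' [Mm' ->]]].
    by exists (m + m'), (r + r'); split; [apply: Madd | rewrite mulrDr addrACA].
  - move=> s x [m [r [Mm ->]]].
    by exists (s * m), (s * r); split; [apply: Mmul | rewrite mulrDr mulrCA].
have [m [r [Mm e]]] : J 1.
  apply: contrapT => nJ1; apply: nMa; apply: (Mmax J) => //.
  - by move=> x Mx; exists x, 0; rewrite mulr0 addr0.
  - by exists 0, 1; rewrite mulr1 add0r.
have -> : b = b * m + (a * b) * r by rewrite [a * b]mulrC -mulrA -mulrDr -e mulr1.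
by apply: Madd; [apply: Mmul | rewrite mulrC; apply: Mmul].
Qed.

Lemma maximal_idl_expr (M : R -> Prop) (x : R) (k : nat) :
  maximal_idl M -> M (x ^+ k) -> M x.
Proof.
move=> Mmax; elim: k => [|k IH] Mxk; first by case: Mmax => -[_ []]; rewrite -(expr0 x).
have [//|nMx] := pselect (M x).
by apply: IH; apply: (maximal_idl_prime Mmax _ nMx); rewrite -exprS.
Qed.

Lemma nilrad_jacrad (x : R) : Nilrad x -> Jacrad x.
Proof.
move=> [m xm0] M Mmax; apply: (maximal_idl_expr (k := m) Mmax).
by rewrite xm0; case: Mmax => -[[]].
Qed.

Lemma jacrad_ideal : is_ideal (@Jacrad R).
Proof.
split.
- by move=> M [[[]]].
- move=> x y hx hy M hM; case: (hM) => [[[_ add _] _] _].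
  by apply: add; [apply: hx | apply: hy].
- by move=> r x hx M hM; case: (hM) => [[[_ _ mul] _] _]; apply: mul; apply: hx.
Qed.

Lemma jacrad_not_unit (x s : R) : Jacrad x -> x * s <> 1.
Proof.
move=> hx e; have [M [hM _]] := exists_maximal_idl proper_idl_zero.
case: (hM) => [[Mid M1] _]; apply: M1; rewrite -e.
exact: idealMr (hx M hM).
Qed.

Lemma jacrad_subr_unit (x r : R) : Jacrad x -> exists u, (1 - x * r) * u = 1.
Proof.
move=> hx; apply: contrapT => nunit.
have Kpr : proper_idl (principal_idl (1 - x * r)).
  by apply: principal_idl_proper => s e; apply: nunit; exists s.
have [M [hM KM]] := exists_maximal_idl Kpr.
case: (hM) => [[Mid M1] _]; apply: M1.
rewrite -(subrK (x * r) 1); case: (Mid) => _ Madd _; apply: Madd.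
  by apply: KM; exists 1; rewrite mulr1.
exact: idealMr Mid _ _ (hx M hM).
Qed.

Lemma jacrad_absorb_eq0 (a q s : R) : Jacrad a -> q = a * s * q -> q = 0.
Proof.
move=> ha e; have [u hu] := jacrad_subr_unit s ha.
have q1as : q * (1 - a * s) = 0 by rewrite mulrBr mulr1 mulrC -e subrr.
by rewrite -[q]mulr1 -hu mulrA q1as mul0r.
Qed.

End Ideals.

Section WeaklyAbsorbing.
Variables (R : comNzRingType) (n : nat).
Hypothesis absorbing : forall I : R -> Prop, proper_idl I -> weakly_n_absorbing n I.

Lemma prod_jacrad_eq0 (a : 'I_n.+1 -> R) :
  (forall i, Jacrad (a i)) -> \prod_(i < n.+1) a i = 0.
Proof.
move=> ha; apply/eqP; apply: contraT => pn0.
set p := \prod_(i < n.+1) a i in pn0 *.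
have pJ : Jacrad p.
  by rewrite /p (bigD1 ord0) //=; exact: idealMr (@jacrad_ideal R) _ _ (ha ord0).
have [_ absorb] := absorbing (principal_idl_proper (fun s => jacrad_not_unit (s := s) pJ)).
have [j [s qps]] := absorb a pn0 (ex_intro _ 1 (esym (mulr1 p))).
set q := \prod_(i < n.+1 | i != j) a i in qps.
have pq : p = a j * q by rewrite /p (bigD1 j).
have q0 : q = 0 by apply: (jacrad_absorb_eq0 (ha j)); rewrite {1}qps pq mulrAC.
by rewrite pq q0 mulr0 eqxx in pn0.
Qed.

Lemma ideal_pow_jacrad_eq0 (x : R) : ideal_pow (@Jacrad R) n.+1 x <-> x = 0.
Proof.
split; last by move=> ->; exists [::]; split => //; rewrite big_nil.
move=> [s [sJ ->]]; rewrite big1_seq // => t /andP [_ ts].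
by rewrite big_tuple; apply: prod_jacrad_eq0 => i; apply: (sJ t ts); apply: mem_tnth.
Qed.

Lemma jacrad_expS_eq0 (x : R) : Jacrad x -> x ^+ n.+1 = 0.
Proof.
by move=> hx; rewrite -[n.+1]card_ord -prodr_const; apply: prod_jacrad_eq0.
Qed.

End WeaklyAbsorbing.

(* The argument does not need [0 < n]. *)
Theorem mainTheorem8 (R : comNzRingType) (n : nat) (hn : (0 < n)%N)
  (H : forall I : R -> Prop, proper_idl I -> @weakly_n_absorbing R n I) :
  (forall x : R, ideal_pow (@Jacrad R) n.+1 x <-> x = 0) /\
  (forall x : R, @Jacrad R x <-> @Nilrad R x).
Proof.
split; first exact: ideal_pow_jacrad_eq0.
move=> x; split; last exact: nilrad_jacrad.
by move=> hx; exists n.+1; apply: jacrad_expS_eq0.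
Qed.
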